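(* Let $A\in\mathbb{R}^{m\times n}$, let $a=\max_{i,j}|A_{i,j}|$, and let $(U,V)$ be an iterative play system for $A$. Let $s,t\ge 0$ be integers and suppose that every row index $i\in\{1,\dots,m\}$ and every column index $j\in\{1,\dots,n\}$ is $E$-eligible in the interval $[s,s+t]$. Then $$\max U(s+t)-\min U(s+t)\le 2a(t+1)\quad\text{and}\quad \max V(s+t)-\min V(s+t)\le 2a(t+1).$$
   Context: An iterative play system $(U,V)$ for $A\in\mathbb{R}^{m\times n}$ is a pair of sequences $U(0),U(1),\dots\in\mathbb{R}^n$ and $V(0),V(1),\dots\in\mathbb{R}^m$ such that $\min U(0)=\max V(0)$ and, for each $t$, $U(t+1)=U(t)+A_{i(t),*}$ and $V(t+1)=V(t)+A_{*,j(t)}$ for some indices $i(t)\in\{1,\dots,m\}$, $j(t)\in\{1,\dots,n\}$, where $A_{i,*}$ is the $i$th row and $A_{*,j}$ the $j$th column of $A$. Write $u_j(t)$, $v_i(t)$ for the entries of $U(t)$, $V(t)$, and $\max$, $\min$ of a vector for its largest/smallest entry. With $a=\max_{i,j}|A_{i,j}|$, row $i$ is $E$-eligible in $[t,t']$ if there exists an integer $t_1\in[t,t']$ with $v_i(t_1)\ge\max V(t_1)-2a$; column $j$ is $E$-eligible in $[t,t']$ if there exists $t_1\in[t,t']$ with $u_j(t_1)\le\min U(t_1)+2a$. *)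

From mathcomp Require Import all_boot all_order all_algebra.
Set Implicit Arguments. Unset Strict Implicit. Unset Printing Implicit Defensive.
Import Order.TTheory GRing.Theory Num.Theory.
Local Open Scope ring_scope.

(* Indices are 0-based ordinals: rows 'I_m.+1, columns 'I_n.+1 (so m+1 >= 1 rows,
   n+1 >= 1 columns, as needed for max/min of vectors to make sense). *)

Definition vmax (R : realDomainType) (k : nat) (v : 'I_k.+1 -> R) : R :=
  \big[Num.max/v ord0]_(x < k.+1) v x.
Definition vmin (R : realDomainType) (k : nat) (v : 'I_k.+1 -> R) : R :=
  \big[Num.min/v ord0]_(x < k.+1) v x.

Definition amax (R : realDomainType) (m n : nat) (A : 'M[R]_(m.+1, n.+1)) : R :=
  \big[Num.max/0]_(i < m.+1) \big[Num.max/0]_(j < n.+1) `|A i j|.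

Definition iterative_play_system (R : realDomainType) (m n : nat)
    (A : 'M[R]_(m.+1, n.+1)) (U : nat -> 'I_n.+1 -> R) (V : nat -> 'I_m.+1 -> R) : Prop :=
  vmin (U 0%N) = vmax (V 0%N) /\
  exists (it : nat -> 'I_m.+1) (jt : nat -> 'I_n.+1),
    forall t : nat,
      (forall j, U t.+1 j = U t j + A (it t) j) /\
      (forall i, V t.+1 i = V t i + A i (jt t)).

Definition row_E_eligible (R : realDomainType) (m n : nat)
    (A : 'M[R]_(m.+1, n.+1)) (V : nat -> 'I_m.+1 -> R) (i : 'I_m.+1) (t t' : nat) : Prop :=
  exists t1 : nat, (t <= t1 <= t')%N /\ vmax (V t1) - 2 * amax A <= V t1 i.

Definition col_E_eligible (R : realDomainType) (m n : nat)
    (A : 'M[R]_(m.+1, n.+1)) (U : nat -> 'I_n.+1 -> R) (j : 'I_n.+1) (t t' : nat) : Prop :=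
  exists t1 : nat, (t <= t1 <= t')%N /\ U t1 j <= vmin (U t1) + 2 * amax A.

From mathcomp Require Import all_boot all_order all_algebra.
From mathcomp Require Import reals.
From mathcomp Require Import lra zify.
Set Implicit Arguments. Unset Strict Implicit. Unset Printing Implicit Defensive.
Import Order.TTheory GRing.Theory Num.Theory.
Local Open Scope ring_scope.

(* Each step adds a row (resp. column) of A, so every entry of U (resp. V)
   moves by at most a per step, and therefore so do max U and min U.  A column
   that was within 2a of the minimum at some time t1 in [s, s + t] is thus
   within 2a + 2a(s + t - t1) <= 2a(t + 1) of it at time s + t; since this holds
   for every column, it holds for the maximum.  The bound for V follows by
   applying the same argument to -V. *)

Section VectorExtrema.
Variables (R : realDomainType) (k : nat).
Implicit Types (v : 'I_k.+1 -> R) (c : R).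

Lemma le_vmax v x : v x <= vmax v.
Proof. exact: le_bigmax. Qed.

Lemma vmin_le v x : vmin v <= v x.
Proof. exact: bigmin_le. Qed.

Lemma vmax_le v c : (forall x, v x <= c) -> vmax v <= c.
Proof. by move=> le_v_c; apply: bigmax_le. Qed.

Lemma le_vmin v c : (forall x, c <= v x) -> c <= vmin v.
Proof. by move=> le_c_v; apply: le_bigmin. Qed.

Lemma vmax_opp v : vmax (fun x => - v x) = - vmin v.
Proof. by rewrite /vmax /vmin (big_morph _ (@oppr_min R) erefl). Qed.

Lemma vmin_opp v : vmin (fun x => - v x) = - vmax v.
Proof. by rewrite /vmax /vmin (big_morph _ (@oppr_max R) erefl). Qed.

End VectorExtrema.

Section BoundedSteps.
Variables (R : realDomainType) (k : nat) (a : R) (w : nat -> 'I_k.+1 -> R).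
Hypothesis w_step : forall t x, `|w t.+1 x - w t x| <= a.

Lemma dist_iter_le t d x : `|w (t + d) x - w t x| <= a * d%:R.
Proof.
elim: d => [|d IHd]; first by rewrite addn0 subrr normr0 mulr0.
rewrite addnS mulrSr mulrDr mulr1 [a * _ + a]addrC.
exact: le_trans (ler_distD (w (t + d) x) _ _) (lerD (w_step _ _) IHd).
Qed.

Lemma vmin_iter_ge t d : vmin (w t) - a * d%:R <= vmin (w (t + d)).
Proof.
apply: le_vmin => x; have := vmin_le (w t) x.
by have := dist_iter_le t d x; rewrite ler_distl => /andP[? _]; lra.
Qed.

Lemma spread_le_near_min s t c :
  (forall x, exists t1, (s <= t1 <= s + t)%N /\ w t1 x <= vmin (w t1) + c) ->
  vmax (w (s + t)) - vmin (w (s + t)) <= c + 2 * a * t%:R.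
Proof.
move=> near_min; have a_ge0 : 0 <= a := le_trans (normr_ge0 _) (w_step 0 ord0).
rewrite lerBlDl; apply: vmax_le => x.
have [t1 [/andP[le_s_t1 le_t1_st] near_x]] := near_min x.
have -> : (s + t = t1 + (s + t - t1))%N by rewrite subnKC.
set d := (s + t - t1)%N.
have le_ad_at : a * d%:R <= a * t%:R by rewrite ler_wpM2l // ler_nat; lia.
have := vmin_iter_ge t1 d.
by have := dist_iter_le t1 d x; rewrite ler_distl => /andP[_ ?]; lra.
Qed.

End BoundedSteps.

Lemma spread_le_near_max (R : realDomainType) (k : nat) (a : R)
    (w : nat -> 'I_k.+1 -> R) s t c :
  (forall t x, `|w t.+1 x - w t x| <= a) ->
  (forall x, exists t1, (s <= t1 <= s + t)%N /\ vmax (w t1) - c <= w t1 x) ->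
  vmax (w (s + t)) - vmin (w (s + t)) <= c + 2 * a * t%:R.
Proof.
move=> w_step near_max.
have opp_step u x : `|- w u.+1 x - - w u x| <= a.
  by rewrite opprK addrC distrC.
have := spread_le_near_min opp_step (s := s) (t := t) (c := c).
rewrite vmax_opp vmin_opp opprK addrC; apply=> x.
have [t1 [range_t1 near_x]] := near_max x.
by exists t1; rewrite vmin_opp; split=> //; lra.
Qed.

Lemma le_amax (R : realDomainType) (m n : nat) (A : 'M[R]_(m.+1, n.+1)) i j :
  `|A i j| <= amax A.
Proof.
exact: le_trans (le_bigmax _ (fun j => `|A i j|) j)
  (le_bigmax _ (fun i => \big[Num.max/0]_(j < n.+1) `|A i j|) i).
Qed.

Lemma play_system_steps (R : realDomainType) (m n : nat) (A : 'M[R]_(m.+1, n.+1))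
    (U : nat -> 'I_n.+1 -> R) (V : nat -> 'I_m.+1 -> R) :
  iterative_play_system A U V ->
  (forall t j, `|U t.+1 j - U t j| <= amax A) /\
  (forall t i, `|V t.+1 i - V t i| <= amax A).
Proof.
move=> [_ [it [jt step]]]; split=> t x.
- by rewrite (proj1 (step t)) addrC addKr le_amax.
- by rewrite (proj2 (step t)) addrC addKr le_amax.
Qed.

Theorem lemma2 (R : realType) (m n : nat) (A : 'M[R]_(m.+1, n.+1))
    (U : nat -> 'I_n.+1 -> R) (V : nat -> 'I_m.+1 -> R) (s t : nat) :
  iterative_play_system A U V ->
  (forall i : 'I_m.+1, row_E_eligible A V i s (s + t)) ->
  (forall j : 'I_n.+1, col_E_eligible A U j s (s + t)) ->
  vmax (U (s + t)%N) - vmin (U (s + t)%N) <= 2 * amax A * (t.+1)%:R /\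
  vmax (V (s + t)%N) - vmin (V (s + t)%N) <= 2 * amax A * (t.+1)%:R.
Proof.
move=> /play_system_steps[U_step V_step] rows_eligible cols_eligible.
have -> : 2 * amax A * (t.+1)%:R = 2 * amax A + 2 * amax A * t%:R.
  by rewrite -[t.+1]addn1 natrD mulrDr mulr1 addrC.
split.
- exact: spread_le_near_min U_step _ _ _ cols_eligible.
- exact: spread_le_near_max V_step rows_eligible.
Qed.
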